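(* There is a function $h:\mathbb{N}^2\to\mathbb{N}$ such that for any $k,t\in\mathbb{N}$ the following holds: if $G$ is a graph that does not contain a half-graph of order $t$ as a semi-induced subgraph, and $u$ and $v$ are vertices in the same connected component of the $k$-near-twin graph $NT_k(G)$, then $u$ and $v$ are $h(k,t)$-near-twins in $G$.
   Context: $N^G(v)$ denotes the set of neighbors of $v$ in $G$. Two vertices $u,v$ are $k$-near-twins in $G$ if $|N^G(u)\,\Delta\,N^G(v)|\le k$. The $k$-near-twin graph $NT_k(G)$ has vertex set $V(G)$, with $u,v$ adjacent iff they are $k$-near-twins in $G$. $G$ contains a half-graph of order $t$ as a semi-induced subgraph if there are distinct vertices $u_1,\dots,u_t,w_1,\dots,w_t$ of $G$ such that $u_iw_j\in E(G)$ iff $i\le j$ (edges among the $u_i$'s and among the $w_j$'s are arbitrary). *)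

From mathcomp Require Import all_boot.
Set Implicit Arguments. Unset Strict Implicit. Unset Printing Implicit Defensive.

Definition simple_graph (T : finType) (e : rel T) : Prop :=
  symmetric e /\ irreflexive e.

Definition nbhd (T : finType) (e : rel T) (v : T) : {set T} := [set w | e v w].

Definition symdiff (T : finType) (A B : {set T}) : {set T} := (A :\: B) :|: (B :\: A).

Definition near_twins (T : finType) (e : rel T) (k : nat) (u v : T) : bool :=
  #|symdiff (nbhd e u) (nbhd e v)| <= k.

Definition NT (T : finType) (e : rel T) (k : nat) : rel T :=
  fun u v => (u != v) && near_twins e k u v.

Definition has_semi_induced_half_graph (T : finType) (e : rel T) (t : nat) : Prop :=
  exists (us ws : 'I_t -> T),
    [/\ injective us, injective ws,
        (forall i j, us i != ws j) &
        (forall i j : 'I_t, e (us i) (ws j) = (i <= j))].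

From mathcomp Require Import all_boot zify.
Set Implicit Arguments. Unset Strict Implicit.

(* Let u = w_0, w_1, ..., w_p = v be a walk in NT_k(G) and X = N(u) \ N(v).
   The number of vertices of X missed by w_q starts at 0, ends at |X| and
   grows by at most k per step.  Put h(0) = 0 and h(t+1) = (t+1) h(t) + k + 1.
   If |X| >= h(t+1), let w_{q+1} be the first walk vertex missing more than
   h(t) vertices of X.  By induction, the vertices of X it misses contain one
   side of a half-graph of order t whose other side lies on the walk; since
   w_{q+1} sees none of the first side, that other side avoids w_{q+1}, so each
   of its vertices misses at most h(t) vertices of X.  As w_{q+1} sees more than
   t h(t) vertices of X, one of them is seen by that whole side, and together
   with w_{q+1} it extends the half-graph to order t+1.  Hence
   |N(u) \ N(v)| < h(t), and symmetrically for N(v) \ N(u). *)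

Fixpoint drift_bound (k t : nat) : nat :=
  if t is t'.+1 then drift_bound k t' * t'.+1 + k.+1 else 0.

Definition snocf (T : Type) (f : nat -> T) (t : nat) (z : T) : nat -> T :=
  fun i => if i < t then f i else z.

Lemma first_crossing (f : nat -> nat) (n p : nat) :
  f 0 < n <= f p -> exists2 q, q < p & (forall r, r <= q -> f r < n) /\ n <= f q.+1.
Proof.
case/andP=> f0 fp.
have [q' nfq' min_q'] := ex_minnP (ex_intro (fun q => n <= f q) p fp).
case: q' nfq' min_q' => [|q]; first by rewrite leqNgt f0.
move=> nfq min_q; exists q; first exact: min_q p fp.
by split=> // r rq; rewrite ltnNge; apply/negP => /min_q; lia.
Qed.

Section NearTwinWalks.
Variables (T : finType) (e : rel T).

Lemma card_bigcup_le (I : finType) (P : pred I) (A : I -> {set T}) :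
  #|\bigcup_(i | P i) A i| <= \sum_(i | P i) #|A i|.
Proof.
apply: (big_ind2 (fun (S : {set T}) n => #|S| <= n : Prop)) => [|S1 n1 S2 n2 h1 h2|//].
  by rewrite cards0.
by rewrite (leq_trans (leq_card_setU S1 S2)) ?leq_add.
Qed.

Lemma card_symdiff (A B : {set T}) : #|symdiff A B| = #|A :\: B| + #|B :\: A|.
Proof.
rewrite /symdiff cardsU; suff -> : (A :\: B) :&: (B :\: A) = set0 by rewrite cards0 subn0.
by apply/setP => x; rewrite !inE; case: (x \in A); case: (x \in B); rewrite ?andbF.
Qed.

Lemma card_setD_nbhd_near_twins k (X : {set T}) x y :
  near_twins e k x y -> #|X :\: nbhd e y| <= #|X :\: nbhd e x| + k.
Proof.
rewrite /near_twins card_symdiff => nt.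
have sub : X :\: nbhd e y \subset (X :\: nbhd e x) :|: (nbhd e x :\: nbhd e y).
  by apply/subsetP => z; rewrite !inE; case: (z \in X); case: (e x z); case: (e y z).
rewrite (leq_trans (subset_leq_card sub)) // (leq_trans (leq_card_setU _ _)) //.
by rewrite leq_add2l (leq_trans _ nt) ?leq_addr.
Qed.

Lemma common_neighbour (X : {set T}) (b : nat -> T) t c :
  (forall i, i < t -> #|X :\: nbhd e (b i)| <= c) -> t * c < #|X| ->
  exists2 x, x \in X & forall i, i < t -> e (b i) x.
Proof.
move=> far_b ltX; set B := \bigcup_(i < t) (X :\: nbhd e (b i)).
have cardB : #|B| <= t * c.
  rewrite (leq_trans (card_bigcup_le _ _)) // -[t in t * c]card_ord -sum_nat_const.
  by apply: leq_sum => i _; apply: far_b.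
have /card_gt0P[x] : 0 < #|X :\: B|.
  rewrite cardsD subn_gt0 (leq_ltn_trans _ ltX) // (leq_trans _ cardB) //.
  exact/subset_leq_card/subsetIr.
rewrite inE => /andP[xB xX]; exists x => // i lt_it.
apply: contraNT xB => nexb; apply/bigcupP; exists (Ordinal lt_it) => //.
by rewrite !inE xX nexb.
Qed.

Hypothesis e_irr : irreflexive e.

Lemma adj_neq x y : e x y -> x != y.
Proof. by apply: contraTneq => ->; rewrite e_irr. Qed.

Definition half_graph t (u z : nat -> T) : Prop :=
  forall i j, i < t -> j < t -> u i != z j /\ e (u i) (z j) = (i <= j).

Lemma half_graph_semi_induced t u z :
  half_graph t u z -> has_semi_induced_half_graph e t.
Proof.
move=> hg; have adj (i j : 'I_t) := (hg i j (ltn_ord i) (ltn_ord j)).2.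
exists (fun i : 'I_t => u i), (fun j : 'I_t => z j); split=> /=.
- move=> i1 i2 /= eq_u; apply/val_inj/eqP.
  by rewrite eqn_leq -(adj i1 i2) eq_u adj leqnn -(adj i2 i1) -eq_u adj leqnn.
- move=> j1 j2 /= eq_z; apply/val_inj/eqP.
  by rewrite eqn_leq -(adj j1 j2) -eq_z adj leqnn -(adj j2 j1) eq_z adj leqnn.
- by move=> i j; apply: (hg i j (ltn_ord i) (ltn_ord j)).1.
- exact: adj.
Qed.

Lemma half_graph_snoc t u z y x :
  half_graph t u z -> e y x ->
  (forall i, i < t -> e (u i) x) ->
  (forall j, j < t -> y != z j /\ ~~ e y (z j)) ->
  half_graph t.+1 (snocf u t y) (snocf z t x).
Proof.
move=> hg yx ux yz i j; rewrite !ltnS /snocf => le_it le_jt.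
case: ltnP => [lt_it|le_ti]; case: ltnP => [lt_jt|le_tj].
- exact: hg.
- by rewrite adj_neq ux // (leq_trans (ltnW lt_it)).
- have [neq_yz nyz] := yz j lt_jt.
  by rewrite (negbTE nyz) leqNgt (leq_trans lt_jt).
- by rewrite adj_neq // yx (leq_trans le_it le_tj).
Qed.

Lemma nonnbhd_without_self (X : {set T}) y :
  exists Z : {set T}, [/\ Z \subset X, {in Z, forall x, y != x /\ ~~ e y x}
    & #|X :\: nbhd e y| <= #|Z :\: nbhd e y|.+1].
Proof.
set Z := (X :\: nbhd e y) :\ y.
have Z_y : {in Z, forall x, y != x /\ ~~ e y x}.
  by move=> x; rewrite !inE eq_sym => /and3P[? ? _].
exists Z; split=> //; first by apply/subsetP => x; rewrite !inE => /and3P[].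
rewrite (_ : Z :\: _ = Z); last first.
  apply/setP => x; rewrite in_setD andbC.
  by case: (boolP (x \in Z)) => // /Z_y[_ nyx]; rewrite inE nyx.
by rewrite (cardsD1 y (X :\: nbhd e y)) -/Z; case: (_ \in _).
Qed.

Lemma walk_half_graph k t (w : nat -> T) p (X : {set T}) :
  X \subset nbhd e (w 0) ->
  (forall i, i < p -> near_twins e k (w i) (w i.+1)) ->
  drift_bound k t <= #|X :\: nbhd e (w p)| ->
  exists u z, [/\ half_graph t u z,
    forall i, i < t -> exists2 q, q <= p & u i = w q &
    forall j, j < t -> z j \in X].
Proof.
elim: t p X => [|t IH] p X sub_X walk far_p; first by exists w, w.
set d := drift_bound k t; set f := fun q => #|X :\: nbhd e (w q)|.
have [q lt_qp [near_q far_q1]] :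
    exists2 q, q < p & (forall r, r <= q -> f r < d.+1) /\ d.+1 <= f q.+1.
  have f0 : f 0 = 0 by apply/eqP; rewrite cards_eq0 setD_eq0.
  apply: first_crossing; rewrite f0 /=.
  by apply: leq_trans far_p; rewrite /= -/d; lia.
set y := w q.+1.
have far_y : f q.+1 <= d + k.
  apply: leq_trans (card_setD_nbhd_near_twins X (walk q lt_qp)) _.
  by rewrite leq_add2r -ltnS near_q.
have [Z [Z_X Z_y far_Z]] := nonnbhd_without_self X y.
have far_Zy : d <= #|Z :\: nbhd e y| by move: far_q1 far_Z; rewrite /f -/y; lia.
have [u [z [hg u_walk z_Z]]] := IH q.+1 Z (subset_trans Z_X sub_X)
  (fun i lt_iq => walk i (leq_trans lt_iq lt_qp)) far_Zy.
have near_u i : i < t -> #|X :\: nbhd e (u i)| <= d.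
  move=> lt_it; have [r le_rq eq_u] := u_walk i lt_it.
  rewrite leq_eqVlt in le_rq; case/orP: le_rq => [/eqP eq_rq | lt_rq].
    have [_ /negP[]] := Z_y _ (z_Z i lt_it).
    by rewrite /y -eq_rq -eq_u (hg i i lt_it lt_it).2.
  by rewrite eq_u -ltnS near_q.
have [x x_Xy u_x] : exists2 x, x \in X :&: nbhd e y & forall i, i < t -> e (u i) x.
  apply: common_neighbour => [i lt_it|].
    by apply: leq_trans (near_u i lt_it); apply/subset_leq_card/setSD/subsetIl.
  move: far_p far_y (cardsID (nbhd e y) X) (subset_leq_card (subsetDl X (nbhd e (w p)))).
  rewrite /= /f -/d -/y; lia.
move: x_Xy; rewrite in_setI inE => /andP[x_X y_x].
exists (snocf u t y), (snocf z t x); split.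
- by apply: half_graph_snoc => // j lt_jt; apply: Z_y; apply: z_Z.
- move=> i; rewrite ltnS /snocf; case: ltnP => [lt_it _ | _ _]; last by exists q.+1.
  by have [r le_rq ->] := u_walk i lt_it; exists r => //; apply: leq_trans le_rq lt_qp.
- move=> j _; rewrite /snocf; case: ltnP => // lt_jt.
  exact: (subsetP Z_X) (z_Z j lt_jt).
Qed.

Lemma card_setD_nbhd_connect k t u v :
  ~ has_semi_induced_half_graph e t -> connect (NT e k) u v ->
  #|nbhd e u :\: nbhd e v| < drift_bound k t.
Proof.
move=> no_hg /connectP[s walk_s ->]; rewrite ltnNge; apply/negP => far.
have walk i : i < size s -> near_twins e k (nth u (u :: s) i) (nth u (u :: s) i.+1).
  by move=> lt_is; case/andP: (pathP u walk_s i lt_is).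
have far_end : drift_bound k t <=
    #|(nbhd e u :\: nbhd e (last u s)) :\: nbhd e (nth u (u :: s) (size s))|.
  by rewrite -last_nth setDDl setUid.
have [x [z [hg _ _]]] := walk_half_graph (subsetDl _ _) walk far_end.
exact: no_hg (half_graph_semi_induced hg).
Qed.

End NearTwinWalks.

Theorem lemma4p5 :
  exists h : nat -> nat -> nat,
    forall (k t : nat) (T : finType) (e : rel T),
      simple_graph e ->
      ~ has_semi_induced_half_graph e t ->
      forall u v : T,
        connect (NT e k) u v ->
        near_twins e (h k t) u v.
Proof.
exists (fun k t => drift_bound k t + drift_bound k t).
move=> k t T e [_ e_irr] no_hg u v uv.
have NT_sym : symmetric (NT e k).
  by move=> x y; rewrite /NT /near_twins eq_sym !card_symdiff addnC.
have vu : connect (NT e k) v u by rewrite (sym_connect_sym NT_sym).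
by rewrite /near_twins card_symdiff leq_add // ltnW //
  (card_setD_nbhd_connect e_irr no_hg).
Qed.
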